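(* Let $X\in\mathbb{R}^{n\times p}$, $\beta^\star\in\mathbb{R}^p$ with support $T$, $|T|=k$, $e^\star\in\mathbb{R}^n$ with support $S$, $|S|=s$, $w\in\mathbb{R}^n$, and $y=X\beta^\star+\sqrt{n}\,e^\star+w$. Let $(\widehat\beta,\widehat e)$ be an optimal solution of the extended Lasso $$\min_{\beta\in\mathbb{R}^p,\,e\in\mathbb{R}^n}\ \frac{1}{2n}\|y-X\beta-\sqrt{n}\,e\|_2^2+\lambda_{n,\beta}\|\beta\|_1+\lambda_{n,e}\|e\|_1$$ with regularization parameters $$\lambda_{n,\beta}=\frac{2}{\gamma}\frac{\|X^{T}w\|_\infty}{n},\qquad \lambda_{n,e}=\frac{2\|w\|_\infty}{\sqrt n},$$ where $\gamma\in(0,1]$. Assume $X$ satisfies the extended restricted eigenvalue condition with constant $\kappa_l>0$ over the set $\mathbb{C}$ (defined with $\lambda=\lambda_{n,e}/\lambda_{n,\beta}$). Then the errors $h=\widehat\beta-\beta^\star$, $f=\widehat e-e^\star$ satisfy $$\|h\|_2+\|f\|_2\le 3\kappa_l^{-2}\big(\lambda_{n,\beta}\sqrt{k}+\lambda_{n,e}\sqrt{s}\big).$$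
   Context: Restricted set: for $\lambda>0$, $\mathbb{C}=\{(h,f)\in\mathbb{R}^p\times\mathbb{R}^n:\ \|h_{T^c}\|_1+\lambda\|f_{S^c}\|_1\le 3\|h_T\|_1+3\lambda\|f_S\|_1\}$, where $h_T$ denotes the restriction of $h$ to the coordinates in $T$. Extended restricted eigenvalue (extended RE) condition over $\mathbb{C}$ with constant $\kappa_l>0$: $\frac{1}{\sqrt n}\|Xh+\sqrt n f\|_2\ge\kappa_l(\|h\|_2+\|f\|_2)$ for all $(h,f)\in\mathbb{C}$. *)

(* statement over an arbitrary real closed field R
   (covers the reals; only algebra/order and square roots are used). *)
From HB Require Import structures.
From mathcomp Require Import all_boot all_order all_algebra.
Set Implicit Arguments. Unset Strict Implicit. Unset Printing Implicit Defensive.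
Import Order.TTheory GRing.Theory Num.Theory.
Local Open Scope ring_scope.

Section Defs.
Variable R : rcfType.

Definition l1norm m (v : 'cV[R]_m) : R := \sum_(i < m) `|v i 0|.
Definition l2norm m (v : 'cV[R]_m) : R := Num.sqrt (\sum_(i < m) v i 0 ^+ 2).
Definition linfnorm m (v : 'cV[R]_m) : R := \big[Num.max/0]_(i < m) `|v i 0|.

Definition supp m (v : 'cV[R]_m) : {set 'I_m} := [set i | v i 0 != 0].

Definition restr m (A : {set 'I_m}) (v : 'cV[R]_m) : 'cV[R]_m :=
  \col_i (if i \in A then v i 0 else 0).

Definition in_cone n p (lam : R) (T : {set 'I_p}) (S : {set 'I_n})
    (h : 'cV[R]_p) (f : 'cV[R]_n) : Prop :=
  l1norm (restr (~: T) h) + lam * l1norm (restr (~: S) f)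
  <= 3 * l1norm (restr T h) + 3 * lam * l1norm (restr S f).

Definition ext_RE n p (X : 'M[R]_(n, p)) (kappa lam : R)
    (T : {set 'I_p}) (S : {set 'I_n}) : Prop :=
  forall (h : 'cV[R]_p) (f : 'cV[R]_n), in_cone lam T S h f ->
    (Num.sqrt (n%:R))^-1 * l2norm (X *m h + Num.sqrt (n%:R) *: f)
      >= kappa * (l2norm h + l2norm f).

Definition ext_lasso_obj n p (X : 'M[R]_(n, p)) (y : 'cV[R]_n)
    (lb le : R) (beta : 'cV[R]_p) (e : 'cV[R]_n) : R :=
  (2 * n%:R)^-1 * l2norm (y - X *m beta - Num.sqrt (n%:R) *: e) ^+ 2
  + lb * l1norm beta + le * l1norm e.

Definition lam_beta n p (X : 'M[R]_(n, p)) (w : 'cV[R]_n) (gamma : R) : R :=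
  2 / gamma * (linfnorm (X^T *m w) / n%:R).
Definition lam_e n (w : 'cV[R]_n) : R := 2 * linfnorm w / Num.sqrt (n%:R).

End Defs.

From HB Require Import structures.
From mathcomp Require Import all_boot all_order all_algebra.
From mathcomp Require Import ring lra.
Import Order.TTheory GRing.Theory Num.Theory.
Local Open Scope ring_scope.
Set Implicit Arguments. Unset Strict Implicit.

(* Write h = beta_hat - beta_star, f = e_hat - e_star and
   v = X h + sqrt n f.
   1. Basic inequality: comparing the objective at the optimum with its value
      at the truth gives |v|^2/n <= 2<w,v>/n + 2 lb (|b*|_1 - |b^|_1)
      + 2 le (|e*|_1 - |e^|_1).
   2. Noise bound: by Hoelder and the choice of lb, le,
      <w,v>/n <= lb/2 |h|_1 + le/2 |f|_1.
   3. Splitting the l1 norms along the supports T, S of the truth yields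
      |v|^2/n + lb |h_T^c|_1 + le |f_S^c|_1 <= 3 (lb |h_T|_1 + le |f_S|_1);
      in particular (h, f) lies in the cone C with lambda = le/lb.
   4. The extended RE condition bounds kappa^2 (|h|_2 + |f|_2)^2 by |v|^2/n,
      and Cauchy-Schwarz bounds |h_T|_1 <= sqrt k |h|_2, |f_S|_1 <= sqrt s |f|_2;
      dividing the resulting quadratic inequality gives the theorem. *)

Section Norms.
Variable R : rcfType.

Definition dot m (u v : 'cV[R]_m) : R := \sum_i u i 0 * v i 0.

Lemma linfnorm_ge0 m (u : 'cV[R]_m) : 0 <= linfnorm u.
Proof. exact: bigmax_ge_id. Qed.

Lemma abs_le_linfnorm m (u : 'cV[R]_m) i : `|u i 0| <= linfnorm u.
Proof. exact: (le_bigmax _ (fun j => `|u j 0|)). Qed.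

Lemma l1norm_ge0 m (u : 'cV[R]_m) : 0 <= l1norm u.
Proof. by apply: sumr_ge0 => i _. Qed.

Lemma l2norm_ge0 m (u : 'cV[R]_m) : 0 <= l2norm u.
Proof. exact: sqrtr_ge0. Qed.

Lemma l2norm_sqr m (u : 'cV[R]_m) : l2norm u ^+ 2 = \sum_i u i 0 ^+ 2.
Proof. by rewrite sqr_sqrtr // sumr_ge0 // => i _; rewrite sqr_ge0. Qed.

Lemma dot_le_linf_l1 m (u h : 'cV[R]_m) : dot u h <= linfnorm u * l1norm h.
Proof.
rewrite /dot /l1norm mulr_sumr; apply: ler_sum => i _.
rewrite (le_trans (ler_norm _)) // normrM ler_wpM2r //.
exact: abs_le_linfnorm.
Qed.

Lemma dot_mulmx n p (X : 'M[R]_(n, p)) (w : 'cV[R]_n) (h : 'cV[R]_p) :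
  dot w (X *m h) = dot (X^T *m w) h.
Proof.
rewrite /dot; under eq_bigr do rewrite mxE mulr_sumr.
rewrite exchange_big /=; apply: eq_bigr => j _.
by rewrite mxE mulr_suml; apply: eq_bigr => i _; rewrite !mxE; ring.
Qed.

Lemma dotDZr m (w u v : 'cV[R]_m) (c : R) :
  dot w (u + c *: v) = dot w u + c * dot w v.
Proof. by rewrite /dot mulr_sumr -big_split /=; apply: eq_bigr => i _; rewrite !mxE; ring. Qed.

Lemma l2norm_subsqr m (w v : 'cV[R]_m) :
  l2norm (w - v) ^+ 2 = l2norm w ^+ 2 - 2 * dot w v + l2norm v ^+ 2.
Proof.
rewrite !l2norm_sqr /dot mulr_sumr -sumrB -big_split /=.
by apply: eq_bigr => i _; rewrite !mxE; ring.
Qed.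

Lemma l1norm_restr m (A : {set 'I_m}) (v : 'cV[R]_m) :
  l1norm (restr A v) = \sum_(i in A) `|v i 0|.
Proof.
rewrite /l1norm (bigID (mem A)) /= [X in _ + X]big1 ?addr0.
  by apply: eq_bigr => i iA; rewrite mxE iA.
by move=> i /negbTE iA; rewrite mxE iA normr0.
Qed.

Lemma l1norm_split m (A : {set 'I_m}) (v : 'cV[R]_m) :
  l1norm v = l1norm (restr A v) + l1norm (restr (~: A) v).
Proof.
rewrite !l1norm_restr /l1norm (bigID (mem A)) /=; congr (_ + _).
by apply: eq_bigl => i; rewrite in_setC.
Qed.

Lemma l1norm_supp_diff m (bs bh : 'cV[R]_m) :
  l1norm bs - l1norm bh <=
  l1norm (restr (supp bs) (bh - bs)) - l1norm (restr (~: supp bs) (bh - bs)).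
Proof.
rewrite (l1norm_split (supp bs) bs) (l1norm_split (supp bs) bh) !l1norm_restr.
have off_supp i : i \in ~: supp bs -> bs i 0 = 0.
  by rewrite in_setC inE negbK => /eqP.
have -> : \sum_(i in ~: supp bs) `|bs i 0| = 0.
  by apply: big1 => i /off_supp ->; rewrite normr0.
have -> : \sum_(i in ~: supp bs) `|bh i 0| =
          \sum_(i in ~: supp bs) `|(bh - bs) i 0|.
  by apply: eq_bigr => i /off_supp e; rewrite !mxE e subr0.
have on_supp : \sum_(i in supp bs) `|bs i 0| - \sum_(i in supp bs) `|bh i 0|
               <= \sum_(i in supp bs) `|(bh - bs) i 0|.
  rewrite -sumrB; apply: ler_sum => i _; rewrite !mxE distrC.
  by rewrite lerBlDr (le_trans _ (ler_normD _ _)) // subrK.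
lra.
Qed.

Lemma sum_sqr_le m (A : {set 'I_m}) (a : 'I_m -> R) :
  (\sum_(i in A) a i) ^+ 2 <= #|A|%:R * \sum_(i in A) a i ^+ 2.
Proof.
have -> : (\sum_(i in A) a i) ^+ 2 = \sum_(i in A) \sum_(j in A) a i * a j.
  by rewrite expr2 mulr_suml; apply: eq_bigr => i _; rewrite mulr_sumr.
have amgm i j : a i * a j <= (a i ^+ 2 + a j ^+ 2) / 2.
  by have := sqr_ge0 (a i - a j); lra.
apply: (le_trans (ler_sum _ (fun i _ => ler_sum _ (fun j _ => amgm i j)))).
rewrite le_eqVlt; apply/orP; left; apply/eqP.
under eq_bigr do rewrite -mulr_suml big_split /= sumr_const.
by rewrite -mulr_suml big_split /= sumr_const sumrMnl -mulr_natr; field.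
Qed.

Lemma l1norm_restr_le_l2 m (A : {set 'I_m}) (h : 'cV[R]_m) :
  l1norm (restr A h) <= Num.sqrt (#|A|%:R) * l2norm h.
Proof.
have sumA_ge0 : 0 <= \sum_(i in A) `|h i 0| by apply: sumr_ge0.
rewrite l1norm_restr /l2norm -sqrtrM // -(ger0_norm sumA_ge0) -sqrtr_sqr.
rewrite ler_sqrt; last by rewrite mulr_ge0 // sumr_ge0 // => i _; rewrite sqr_ge0.
apply: le_trans (sum_sqr_le A (fun i => `|h i 0|)) _.
rewrite ler_wpM2l // [X in _ <= X](bigID (mem A)) /=.
under eq_bigr do rewrite real_normK ?num_real //.
by rewrite lerDl sumr_ge0 // => i _; rewrite sqr_ge0.
Qed.

Lemma l1norm_restr_le_l2_add m m' (A : {set 'I_m}) (h : 'cV[R]_m) (g : 'cV[R]_m') :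
  l1norm (restr A h) <= Num.sqrt (#|A|%:R) * (l2norm h + l2norm g).
Proof.
rewrite (le_trans (l1norm_restr_le_l2 A h)) // ler_wpM2l ?sqrtr_ge0 //.
by rewrite lerDl l2norm_ge0.
Qed.

End Norms.

Lemma tradeoff_in_cone (R : rcfType) n p (lb le slack : R) (T : {set 'I_p}) (S : {set 'I_n})
    (h : 'cV[R]_p) (f : 'cV[R]_n) :
  0 < lb -> 0 <= slack ->
  slack + lb * l1norm (restr (~: T) h) + le * l1norm (restr (~: S) f)
    <= 3 * (lb * l1norm (restr T h) + le * l1norm (restr S f)) ->
  in_cone (le / lb) T S h f.
Proof.
move=> lb_gt0 slack_ge0 tradeoff; rewrite /in_cone -(ler_pM2l lb_gt0).
have le_eq : le = lb * (le / lb) by rewrite mulrC divfK // gt_eqF.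
rewrite le_eq in tradeoff; nra.
Qed.

Lemma quadratic_bound (F : realFieldType) (k x B : F) :
  0 < k -> 0 <= x -> 0 <= B -> (k * x) ^+ 2 <= B * x -> x <= B / k ^+ 2.
Proof.
move=> k_gt0 x_ge0 B_ge0 quad.
have k2_gt0 : 0 < k ^+ 2 by rewrite exprn_gt0.
rewrite ler_pdivlMr //.
case: (ltgtP x 0) => [|x_gt0|->]; first by rewrite ltNge x_ge0.
  have sq : x * k ^+ 2 * x = (k * x) ^+ 2 by ring.
  by rewrite -(ler_pM2r x_gt0) sq.
by rewrite mul0r.
Qed.

Section ExtendedLasso.
Variables (R : rcfType) (n p : nat) (X : 'M[R]_(n, p)) (w : 'cV[R]_n).
Hypothesis n_gt0 : (0 < n)%N.

Local Notation sn := (Num.sqrt (n%:R : R)).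

Let nR_neq0 : n%:R != 0 :> R. Proof. by rewrite pnatr_eq0 -lt0n. Qed.

Lemma lam_beta_ge0 (gamma : R) : 0 < gamma -> 0 <= lam_beta X w gamma.
Proof. by move=> ?; rewrite mulr_ge0 ?divr_ge0 ?ler0n ?linfnorm_ge0 // ltW. Qed.

Lemma lam_e_ge0 : 0 <= lam_e w.
Proof. by rewrite divr_ge0 ?sqrtr_ge0 ?mulr_ge0 ?linfnorm_ge0. Qed.

Lemma basic_inequality (lb le : R) (beta_star beta_hat : 'cV[R]_p)
    (e_star e_hat : 'cV[R]_n) :
  let y := X *m beta_star + sn *: e_star + w in
  let v := X *m (beta_hat - beta_star) + sn *: (e_hat - e_star) in
  ext_lasso_obj X y lb le beta_hat e_hat <= ext_lasso_obj X y lb le beta_star e_star ->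
  l2norm v ^+ 2 / n%:R <= 2 * (dot w v / n%:R)
    + 2 * lb * (l1norm beta_star - l1norm beta_hat)
    + 2 * le * (l1norm e_star - l1norm e_hat).
Proof.
move=> y v; rewrite /ext_lasso_obj.
have -> : y - X *m beta_hat - sn *: e_hat = w - v.
  by rewrite /y /v mulmxBr scalerBr; apply/matrixP => i j; rewrite !mxE; ring.
have -> : y - X *m beta_star - sn *: e_star = w.
  by rewrite /y; apply/matrixP => i j; rewrite !mxE; ring.
rewrite l2norm_subsqr.
have expand : (2 * n%:R)^-1 * (l2norm w ^+ 2 - 2 * dot w v + l2norm v ^+ 2) =
  (l2norm w ^+ 2 / n%:R - 2 * (dot w v / n%:R) + l2norm v ^+ 2 / n%:R) / 2.
  by field.
have -> : (2 * n%:R)^-1 * l2norm w ^+ 2 = l2norm w ^+ 2 / n%:R / 2 by field.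
rewrite expand; lra.
Qed.

Lemma noise_le_penalty (gamma : R) (h : 'cV[R]_p) (f : 'cV[R]_n) :
  0 < gamma -> gamma <= 1 ->
  dot w (X *m h + sn *: f) / n%:R <=
    lam_beta X w gamma / 2 * l1norm h + lam_e w / 2 * l1norm f.
Proof.
move=> gamma_gt0 gamma_le1.
have h0 := l1norm_ge0 h.
have Dh := dot_le_linf_l1 (X^T *m w) h; have Df := dot_le_linf_l1 w f.
have sn_gt0 : 0 < sn by rewrite sqrtr_gt0 ltr0n.
have Lq : linfnorm (X^T *m w) / n%:R = lam_beta X w gamma * gamma / 2.
  by rewrite /lam_beta; field; rewrite nR_neq0 gt_eqF.
have Wq : sn * linfnorm w / n%:R = lam_e w / 2.
  have snsq : sn ^+ 2 = n%:R by rewrite sqr_sqrtr ?ler0n.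
  by rewrite /lam_e -[X in _ / X = _]snsq; field; rewrite gt_eqF.
have lb0 := lam_beta_ge0 gamma_gt0.
have n_inv_ge0 : 0 <= (n%:R : R)^-1 by rewrite invr_ge0 ler0n.
rewrite dotDZr dot_mulmx mulrDl; apply: lerD.
  rewrite (le_trans (ler_wpM2r n_inv_ge0 Dh)) // mulrAC Lq.
  have g1 : 0 <= 1 - gamma by rewrite subr_ge0.
  have := mulr_ge0 (mulr_ge0 lb0 g1) h0; nra.
rewrite (le_trans (ler_wpM2r n_inv_ge0 (ler_wpM2l (ltW sn_gt0) Df))) //.
by rewrite mulrA mulrAC Wq.
Qed.

Lemma lasso_error_tradeoff (gamma : R) (beta_star beta_hat : 'cV[R]_p)
    (e_star e_hat : 'cV[R]_n) :
  0 < gamma -> gamma <= 1 ->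
  let lb := lam_beta X w gamma in
  let le := lam_e w in
  let y := X *m beta_star + sn *: e_star + w in
  let h := beta_hat - beta_star in
  let f := e_hat - e_star in
  ext_lasso_obj X y lb le beta_hat e_hat <= ext_lasso_obj X y lb le beta_star e_star ->
  l2norm (X *m h + sn *: f) ^+ 2 / n%:R
    + lb * l1norm (restr (~: supp beta_star) h)
    + le * l1norm (restr (~: supp e_star) f)
  <= 3 * (lb * l1norm (restr (supp beta_star) h)
          + le * l1norm (restr (supp e_star) f)).
Proof.
move=> gamma_gt0 gamma_le1 lb le y h f opt.
have basic := basic_inequality opt.
have noise := noise_le_penalty h f gamma_gt0 gamma_le1.
have Pb := ler_wpM2l (lam_beta_ge0 gamma_gt0) (l1norm_supp_diff beta_star beta_hat).
have Pe := ler_wpM2l lam_e_ge0 (l1norm_supp_diff e_star e_hat).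
rewrite -/lb -/le -/h -/f in basic Pb Pe.
rewrite -/lb -/le (l1norm_split (supp beta_star) h) (l1norm_split (supp e_star) f) in noise.
lra.
Qed.

Lemma ext_RE_sqr (kappa lam : R) (T : {set 'I_p}) (S : {set 'I_n})
    (h : 'cV[R]_p) (f : 'cV[R]_n) :
  0 <= kappa -> ext_RE X kappa lam T S -> in_cone lam T S h f ->
  (kappa * (l2norm h + l2norm f)) ^+ 2 <= l2norm (X *m h + sn *: f) ^+ 2 / n%:R.
Proof.
move=> kappa_ge0 RE cone.
have snsq : sn ^+ 2 = n%:R by rewrite sqr_sqrtr ?ler0n.
have -> : l2norm (X *m h + sn *: f) ^+ 2 / n%:R =
          (sn^-1 * l2norm (X *m h + sn *: f)) ^+ 2.
  by rewrite exprMn exprVn snsq mulrC.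
rewrite ler_pXn2r // ?nnegrE ?mulr_ge0 ?addr_ge0 ?l2norm_ge0 ?invr_ge0 ?sqrtr_ge0 //.
exact: RE.
Qed.

End ExtendedLasso.

Unset Implicit Arguments.

Theorem theorem1 (R : rcfType) (n p : nat) (X : 'M[R]_(n, p))
    (beta_star : 'cV[R]_p) (e_star w : 'cV[R]_n) (gamma kappa : R)
    (beta_hat : 'cV[R]_p) (e_hat : 'cV[R]_n) :
  0 < gamma -> gamma <= 1 ->
  0 < kappa ->
  0 < lam_beta X w gamma -> 0 < lam_e w ->
  ext_RE X kappa (lam_e w / lam_beta X w gamma) (supp beta_star) (supp e_star) ->
  (forall (beta : 'cV[R]_p) (e : 'cV[R]_n),
     ext_lasso_obj X (X *m beta_star + Num.sqrt (n%:R) *: e_star + w)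
       (lam_beta X w gamma) (lam_e w) beta_hat e_hat
     <= ext_lasso_obj X (X *m beta_star + Num.sqrt (n%:R) *: e_star + w)
       (lam_beta X w gamma) (lam_e w) beta e) ->
  l2norm (beta_hat - beta_star) + l2norm (e_hat - e_star)
    <= 3 / kappa ^+ 2 *
       (lam_beta X w gamma * Num.sqrt (#|supp beta_star|%:R)
        + lam_e w * Num.sqrt (#|supp e_star|%:R)).
Proof.
move=> gamma_gt0 gamma_le1 kappa_gt0 lb_gt0 le_gt0 RE opt.
have n_gt0 : (0 < n)%N.
  rewrite lt0n -(pnatr_eq0 R); apply/negP => /eqP n0.
  by move: lb_gt0; rewrite /lam_beta n0 invr0 !mulr0 ltxx.
set lb := lam_beta X w gamma in lb_gt0 RE opt *.
set le := lam_e w in le_gt0 RE opt *.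
set h := beta_hat - beta_star; set f := e_hat - e_star.
have tradeoff := lasso_error_tradeoff n_gt0 gamma_gt0 gamma_le1 (opt beta_star e_star).
rewrite -/lb -/le -/h -/f in tradeoff.
set Q := _ / n%:R in tradeoff.
have Q_ge0 : 0 <= Q by rewrite divr_ge0 ?sqr_ge0 ?ler0n.
have cone := tradeoff_in_cone lb_gt0 Q_ge0 tradeoff.
have RE_bound := ext_RE_sqr (ltW kappa_gt0) RE cone; rewrite -/Q in RE_bound.
have on_T := ler_wpM2l (ltW lb_gt0) (l1norm_restr_le_l2_add (supp beta_star) h f).
have on_S := ler_wpM2l (ltW le_gt0) (l1norm_restr_le_l2_add (supp e_star) f h).
have off_T := mulr_ge0 (ltW lb_gt0) (l1norm_ge0 (restr (~: supp beta_star) h)).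
have off_S := mulr_ge0 (ltW le_gt0) (l1norm_ge0 (restr (~: supp e_star) f)).
rewrite mulrAC; apply: quadratic_bound => //.
- by rewrite addr_ge0 ?l2norm_ge0.
- by rewrite mulr_ge0 // addr_ge0 // mulr_ge0 ?sqrtr_ge0 // ltW.
lra.
Qed.
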